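(* Let $\{R_i\}_{i\in I}$ be a family of commutative rings with identity and $R=\prod_{i\in I}R_i$. If $R$ is almost complemented, then each $R_i$ is almost complemented. Conversely, if each $R_i$ is almost complemented and the family $\{R_i\}$ is of bounded nilpotence, then $R$ is almost complemented.
   Context: For a ring $A$, $\mathfrak{N}(A)$ is the nilradical and $\mathrm{reg}(A)$ the set of regular elements. $A$ is complemented if for every $a\in A$ there is $b$ with $ab=0$ and $a+b\in\mathrm{reg}(A)$; $A$ is almost complemented if $A/\mathfrak{N}(A)$ is complemented. A family $\{R_i\}$ is of bounded nilpotence if there is $k\in\mathbb{N}$ with $x^k=0$ for all $i$ and all $x\in\mathfrak{N}(R_i)$. *)

From HB Require Import structures.
From mathcomp Require Import all_boot all_order all_algebra.
From mathcomp Require Import boolp.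

Set Implicit Arguments.
Unset Strict Implicit.
Unset Printing Implicit Defensive.

Import GRing.Theory.
Local Open Scope ring_scope.

(* comPzRingType (commutative rings with 1, the zero ring allowed).       *)

Definition nilpotent (A : comPzRingType) (x : A) : Prop :=
  exists n : nat, x ^+ n = 0.

Definition nilradical (A : comPzRingType) : A -> Prop := @nilpotent A.

Definition regular (A : comPzRingType) (a : A) : Prop :=
  forall c : A, a * c = 0 -> c = 0.

Definition complemented (A : comPzRingType) : Prop :=
  forall a : A, exists b : A, a * b = 0 /\ regular (a + b).

(* A/J is complemented, for an ideal J of A, written out on representatives:
   the class of x is 0 in A/J iff J x; so "for every class [a] there is a
   class [b] with [a][b] = 0 and [a]+[b] regular in A/J" reads as below. *)
Definition complemented_modulo (A : comPzRingType) (J : A -> Prop) : Prop :=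
  forall a : A, exists b : A,
    J (a * b) /\ (forall c : A, J ((a + b) * c) -> J c).

Definition almost_complemented (A : comPzRingType) : Prop :=
  complemented_modulo (@nilradical A).

Definition bounded_nilpotence (I : Type) (R : I -> comPzRingType) : Prop :=
  exists k : nat, forall (i : I) (x : R i), nilpotent x -> x ^+ k = 0.

Definition prodR (I : Type) (R : I -> comPzRingType) : Type := forall i, R i.

Section ProductRing.
Variables (I : Type) (R : I -> comPzRingType).
Local Notation P := (prodR R).

HB.instance Definition _ := gen_eqMixin P.
HB.instance Definition _ := gen_choiceMixin P.

Definition prod_zero : P := fun i => 0.
Definition prod_add (f g : P) : P := fun i => f i + g i.
Definition prod_opp (f : P) : P := fun i => - f i.
Definition prod_one : P := fun i => 1.
Definition prod_mul (f g : P) : P := fun i => f i * g i.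

Lemma prod_addA : associative prod_add.
Proof. by move=> f g h; apply: functional_extensionality_dep => i; rewrite /prod_add addrA. Qed.
Lemma prod_addC : commutative prod_add.
Proof. by move=> f g; apply: functional_extensionality_dep => i; rewrite /prod_add addrC. Qed.
Lemma prod_add0 : left_id prod_zero prod_add.
Proof. by move=> f; apply: functional_extensionality_dep => i; rewrite /prod_add add0r. Qed.
Lemma prod_addN : left_inverse prod_zero prod_opp prod_add.
Proof. by move=> f; apply: functional_extensionality_dep => i; rewrite /prod_add /prod_opp addNr. Qed.

HB.instance Definition _ :=
  GRing.isZmodule.Build P prod_addA prod_addC prod_add0 prod_addN.

Lemma prod_mulA : associative prod_mul.
Proof. by move=> f g h; apply: functional_extensionality_dep => i; rewrite /prod_mul mulrA. Qed.
Lemma prod_mulC : commutative prod_mul.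
Proof. by move=> f g; apply: functional_extensionality_dep => i; rewrite /prod_mul mulrC. Qed.
Lemma prod_mul1 : left_id prod_one prod_mul.
Proof. by move=> f; apply: functional_extensionality_dep => i; rewrite /prod_mul mul1r. Qed.
Lemma prod_mulDl : left_distributive prod_mul (@GRing.add P).
Proof. by move=> f g h; apply: functional_extensionality_dep => i; rewrite /prod_mul /= /prod_add mulrDl. Qed.

HB.instance Definition _ :=
  GRing.Zmodule_isComPzRing.Build P prod_mulA prod_mulC prod_mul1 prod_mulDl.

End ProductRing.

Lemma prodR_addE (I : Type) (R : I -> comPzRingType) (f g : prodR R) i :
  (f + g) i = f i + g i.
Proof. by []. Qed.
Lemma prodR_mulE (I : Type) (R : I -> comPzRingType) (f g : prodR R) i :
  (f * g) i = f i * g i.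
Proof. by []. Qed.
Lemma prodR_oneE (I : Type) (R : I -> comPzRingType) i :
  (1 : prodR R) i = 1.
Proof. by []. Qed.
Lemma prodR_zeroE (I : Type) (R : I -> comPzRingType) i :
  (0 : prodR R) i = 0.
Proof. by []. Qed.

From HB Require Import structures.
From mathcomp Require Import all_boot all_order all_algebra.
From mathcomp Require Import boolp.

(* Nilpotence in the product is detected componentwise, but only with a
   common exponent; this is where bounded nilpotence enters.  Complements
   can then be chosen coordinatewise.  Conversely, a complement of the
   element supported at the single coordinate i projects to a complement
   in R_i, and regularity modulo the nilradical is tested against elements
   supported at i. *)

Set Implicit Arguments.
Unset Strict Implicit.
Unset Printing Implicit Defensive.
Import GRing.Theory.
Local Open Scope ring_scope.

Section ProductNilradical.
Variables (I : Type) (R : I -> comPzRingType).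

Lemma prodR_expE (f : prodR R) i n : (f ^+ n) i = f i ^+ n.
Proof. by elim: n => [|n IHn]; rewrite ?expr0 // !exprS prodR_mulE IHn. Qed.

Lemma prodR_exp_eq0 (f : prodR R) n :
  (forall i, f i ^+ n = 0) -> f ^+ n = 0.
Proof. by move=> fn0; apply: functional_extensionality_dep => i; rewrite prodR_expE fn0. Qed.

Lemma nilpotent_prodR_component (f : prodR R) i :
  nilpotent f -> nilpotent (f i).
Proof. by case=> n fn0; exists n; rewrite -prodR_expE fn0. Qed.

Lemma nilpotent_prodR (f : prodR R) :
  bounded_nilpotence R -> (forall i, nilpotent (f i)) -> nilpotent f.
Proof. by case=> k nilk fnil; exists k; apply: prodR_exp_eq0 => i; apply: nilk. Qed.

(* Indices are compared classically, so I need not be an eqType. *)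
Definition single (i : I) (x : R i) : prodR R :=
  fun j => if pselect (i = j) is left e then eq_rect i R x j e else 0.

Lemma single_id i (x : R i) : single x i = x.
Proof. by rewrite /single; case: pselect => // e; rewrite (Prop_irrelevance e erefl). Qed.

Lemma single_other i j (x : R i) : i <> j -> single x j = 0.
Proof. by rewrite /single; case: pselect. Qed.

Lemma mulr_single (f : prodR R) i (x : R i) : f * single x = single (f i * x).
Proof.
apply: functional_extensionality_dep => j; rewrite prodR_mulE.
have [<-|ij] := pselect (i = j); first by rewrite !single_id.
by rewrite !single_other // mulr0.
Qed.

Lemma nilpotent_single i (x : R i) : nilpotent x -> nilpotent (single x).
Proof.
case=> n xn0; exists n.+1; apply: prodR_exp_eq0 => j.
have [<-|ij] := pselect (i = j); first by rewrite single_id exprS xn0 mulr0.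
by rewrite single_other // exprS mul0r.
Qed.

Lemma almost_complemented_prodR_component i :
  almost_complemented (prodR R) -> almost_complemented (R i).
Proof.
move=> compl a; have [b [nil_ab reg_ab]] := compl (single a).
exists (b i); split.
  by have := nilpotent_prodR_component i nil_ab; rewrite prodR_mulE single_id.
move=> c nil_abc.
have nil_c : nilpotent (single c).
  apply: reg_ab; rewrite mulr_single prodR_addE single_id.
  exact: nilpotent_single.
by have := nilpotent_prodR_component i nil_c; rewrite single_id.
Qed.

Lemma almost_complemented_prodR :
  (forall i, almost_complemented (R i)) -> bounded_nilpotence R ->
  almost_complemented (prodR R).
Proof.
move=> compl bnil f.
have /(_ _)/cid-/all_sig[b compl_b] := fun i => compl i (f i).
exists b; split.
  by apply: nilpotent_prodR => // i; rewrite prodR_mulE; case: (compl_b i).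
move=> c nil_fbc; apply: nilpotent_prodR => // i.
case: (compl_b i) => _; apply.
by have := nilpotent_prodR_component i nil_fbc; rewrite prodR_mulE prodR_addE.
Qed.

End ProductNilradical.

Theorem mainTheorem9 (I : Type) (R : I -> comPzRingType) :
  (almost_complemented (prodR R) -> forall i : I, almost_complemented (R i)) /\
  ((forall i : I, almost_complemented (R i)) -> bounded_nilpotence R ->
     almost_complemented (prodR R)).
Proof.
split=> [compl i|]; first exact: almost_complemented_prodR_component.
exact: almost_complemented_prodR.
Qed.
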